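(* Let $\mathcal{G}=(\mathcal{V},\mathcal{E})$ be a connected undirected graph with $n$ vertices and $m$ edges, with incidence matrix $B\in\mathbb{R}^{n\times m}$ (for an arbitrary orientation of the edges), and let $\Gamma=\mathrm{diag}(\gamma_1,\dots,\gamma_m)$ with $\gamma_k>0$. Let $\mathcal{V}=\mathcal{V}_1\cup\mathcal{V}_2$ be a partition into disjoint nonempty sets and write $B=\begin{bmatrix}B_1\\ B_2\end{bmatrix}$ accordingly, $B_1\in\mathbb{R}^{|\mathcal{V}_1|\times m}$, $B_2\in\mathbb{R}^{|\mathcal{V}_2|\times m}$. Define $$L_S=B_1\Gamma B_1^T-B_1\Gamma B_2^T(B_2\Gamma B_2^T)^{-1}B_2\Gamma B_1^T,$$ $B_2^+=\Gamma B_2^T(B_2\Gamma B_2^T)^{-1}$ and the projected incidence matrix $B_S=B_1(I-B_2^+B_2)\in\mathbb{R}^{|\mathcal{V}_1|\times m}$. Then: (i) $\operatorname{im}\mathbb{1}=\ker B_S^T$, where $\mathbb{1}$ is the all-ones vector in $\mathbb{R}^{|\mathcal{V}_1|}$; (ii) $B_S\Gamma B_2^T=0$; (iii) $L_S=B_S\Gamma B_1^T$; (iv) $L_S=B_S\Gamma B_S^T$.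
   Context: The incidence matrix $B$ has entries $b_{ik}=+1$ if vertex $i$ is the tail of edge $k$, $-1$ if $i$ is the head of edge $k$, and $0$ otherwise. $L_S$ is the Schur complement of the weighted Laplacian $L=B\Gamma B^T$ with respect to the block indexed by $\mathcal{V}_2$; $B_2\Gamma B_2^T$ is invertible since $\mathcal{G}$ is connected. *)

From mathcomp Require Import all_boot all_order all_algebra.
Set Implicit Arguments. Unset Strict Implicit. Unset Printing Implicit Defensive.
Import Order.TTheory GRing.Theory Num.Theory.
Local Open Scope ring_scope.

(* An (oriented) graph with vertex set 'I_n and edge set 'I_m: edge k goes
   from vertex [tl k] (tail) to vertex [hd k] (head). *)

Definition incidence (R : pzRingType) (n m : nat) (tl hd : 'I_m -> 'I_n) : 'M[R]_(n, m) :=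
  \matrix_(i < n, k < m)
     ((if tl k == i then 1 else 0) - (if hd k == i then 1 else 0)).

Definition adjacent (n m : nat) (tl hd : 'I_m -> 'I_n) : rel 'I_n :=
  fun i j => [exists k : 'I_m, ((tl k == i) && (hd k == j)) || ((tl k == j) && (hd k == i))].

Definition connected_graph (n m : nat) (tl hd : 'I_m -> 'I_n) : Prop :=
  forall i j : 'I_n, connect (adjacent tl hd) i j.

From mathcomp Require Import all_boot all_order all_algebra.
From mathcomp Require Import ring.
Set Implicit Arguments.
Unset Strict Implicit.
Unset Printing Implicit Defensive.
Import Order.TTheory GRing.Theory Num.Theory.
Local Open Scope ring_scope.

(* The kernel of [B^T] consists of the vertex potentials that agree along every
   edge, i.e. (by connectivity) of the constants.  Hence [B2 Γ B2^T] is
   positive definite: a vector in its kernel is a potential vanishing on [V2]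
   and constant, so zero because [V1] is nonempty.  The identities (ii)-(iv) are
   then matrix algebra with the weighted right inverse [B2^+] of [B2], and
   [ker B_S^T] is the set of restrictions to [V1] of vectors in [ker B^T]. *)

Lemma incidence_tr_mul (R : pzRingType) n m (tl hd : 'I_m -> 'I_n)
    (y : 'cV[R]_n) k :
  ((incidence R tl hd)^T *m y) k 0 = y (tl k) 0 - y (hd k) 0.
Proof.
rewrite mxE; under eq_bigr => i _ do rewrite !mxE mulrBl.
rewrite sumrB; congr (_ - _).
- rewrite (bigD1 (tl k)) //= eqxx mul1r big1 ?addr0 // => i /negbTE.
  by rewrite eq_sym => ->; rewrite mul0r.
- rewrite (bigD1 (hd k)) //= eqxx mul1r big1 ?addr0 // => i /negbTE.
  by rewrite eq_sym => ->; rewrite mul0r.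
Qed.

Lemma incidence_tr_const (R : pzRingType) n m (tl hd : 'I_m -> 'I_n) (c : R) :
  (incidence R tl hd)^T *m (const_mx c : 'cV_n) = 0.
Proof.
by apply/matrixP => k j; rewrite (ord1 j) incidence_tr_mul !mxE subrr.
Qed.

Lemma incidence_tr_ker_const (R : pzRingType) n m (tl hd : 'I_m -> 'I_n)
    (y : 'cV[R]_n) :
  connected_graph tl hd -> (incidence R tl hd)^T *m y = 0 ->
  forall i j, y i 0 = y j 0.
Proof.
move=> conn yB i j; have /connectP [p path_p ->] := conn i j.
have edge_eq k : y (tl k) 0 = y (hd k) 0.
  by apply/eqP; rewrite -subr_eq0 -incidence_tr_mul yB mxE.
elim: p i path_p => [|a p IHp] i //= /andP [adj_ia path_p].
rewrite -(IHp a path_p).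
by case/existsP: adj_ia => k /orP [] /andP [/eqP <- /eqP <-].
Qed.

Lemma tr_col_mul_col (R : pzRingType) p q m (A1 : 'M[R]_(p, m)) (A2 : 'M_(q, m))
    (x1 : 'cV_p) (x2 : 'cV_q) :
  (col_mx A1 A2)^T *m col_mx x1 x2 = A1^T *m x1 + A2^T *m x2.
Proof. by rewrite tr_col_mx mul_row_col. Qed.

Section PartitionedIncidence.

Variables (R : comPzRingType) (n1 n2 m : nat) (tl hd : 'I_m -> 'I_(n1 + n2)).
Hypothesis conn : connected_graph tl hd.
Let B := incidence R tl hd.

Lemma incidence_blocks_ker_const (x1 : 'cV_n1) (x2 : 'cV_n2) :
  (usubmx B)^T *m x1 + (dsubmx B)^T *m x2 = 0 ->
  forall i j, col_mx x1 x2 i 0 = col_mx x1 x2 j 0.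
Proof.
rewrite -tr_col_mul_col vsubmxK; exact: incidence_tr_ker_const.
Qed.

Lemma incidence_dsubmx_left_ker (v : 'rV_n2) :
  (0 < n1)%N -> v *m dsubmx B = 0 -> v = 0.
Proof.
move=> n1_gt0 vB2; pose i0 : 'I_n1 := Ordinal n1_gt0.
have ker : (usubmx B)^T *m (0 : 'cV_n1) + (dsubmx B)^T *m v^T = 0.
  by rewrite mulmx0 add0r -trmx_mul vB2 trmx0.
apply/matrixP => i j; rewrite (ord1 i) !mxE.
have := incidence_blocks_ker_const ker (rshift n1 j) (lshift n2 i0).
by rewrite col_mxEd col_mxEu !mxE.
Qed.

End PartitionedIncidence.

Section PositiveWeights.

Variables (R : realFieldType) (m : nat) (gamma : 'rV[R]_m).
Hypothesis gamma_gt0 : forall k, 0 < gamma 0 k.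

Lemma diag_quad_eq0 (u : 'rV_m) : u *m diag_mx gamma *m u^T = 0 -> u = 0.
Proof.
move/matrixP => /(_ 0 0); rewrite !mxE => quad0.
have sum0 : \sum_k u 0 k ^+ 2 * gamma 0 k = 0.
  by rewrite -[RHS]quad0; apply: eq_bigr => k _; rewrite mul_mx_diag !mxE; ring.
apply/matrixP => i k; rewrite (ord1 i) [RHS]mxE.
have /eqP := psumr_eq0P
  (fun j _ => mulr_ge0 (sqr_ge0 (u 0 j)) (ltW (gamma_gt0 j))) sum0 (i := k) isT.
by rewrite mulf_eq0 sqrf_eq0 (gt_eqF (gamma_gt0 k)) orbF => /eqP.
Qed.

Lemma unitmx_mul_diag_tr p (A : 'M[R]_(p, m)) :
  (forall v : 'rV_p, v *m A = 0 -> v = 0) ->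
  A *m diag_mx gamma *m A^T \in unitmx.
Proof.
move=> A_left_inj; rewrite unitmxE unitfE; apply/negP => /det0P [v v_neq0 vM].
apply/negP: v_neq0; rewrite negbK; apply/eqP/A_left_inj/diag_quad_eq0.
by rewrite trmx_mul !mulmxA -(mulmxA v) -(mulmxA v) vM mul0mx.
Qed.

End PositiveWeights.

Definition wpinvmx (R : comUnitRingType) q m (B2 : 'M[R]_(q, m)) (G : 'M_m) :=
  G *m B2^T *m invmx (B2 *m G *m B2^T).

Definition proj_incidence (R : comUnitRingType) p q m
    (B1 : 'M[R]_(p, m)) (B2 : 'M_(q, m)) (G : 'M_m) :=
  B1 *m (1%:M - wpinvmx B2 G *m B2).

Definition schurmx (R : comUnitRingType) p q m
    (B1 : 'M[R]_(p, m)) (B2 : 'M_(q, m)) (G : 'M_m) :=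
  B1 *m G *m B1^T - B1 *m G *m B2^T *m invmx (B2 *m G *m B2^T) *m B2 *m G *m B1^T.

Section SchurComplement.

Variables (R : comUnitRingType) (p q m : nat).
Variables (B1 : 'M[R]_(p, m)) (B2 : 'M[R]_(q, m)) (G : 'M[R]_m).
Hypothesis M_unit : B2 *m G *m B2^T \in unitmx.

Local Notation B2p := (wpinvmx B2 G).
Local Notation BS := (proj_incidence B1 B2 G).

Lemma wpinvmx_rinv : B2 *m B2p = 1%:M.
Proof. by rewrite /wpinvmx !mulmxA mulmxV. Qed.

Lemma proj_incidence_orth : BS *m G *m B2^T = 0.
Proof.
have B2pM : B2p *m B2 *m (G *m B2^T) = G *m B2^T.
  by rewrite -mulmxA (mulmxA B2) /wpinvmx -mulmxA mulVmx // mulmx1.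
by rewrite /proj_incidence -2!mulmxA mulmxBl mul1mx B2pM subrr mulmx0.
Qed.

Lemma schurmx_proj_incidence : schurmx B1 B2 G = BS *m G *m B1^T.
Proof. by rewrite /schurmx /proj_incidence /wpinvmx mulmxBr mulmx1 !mulmxBl !mulmxA. Qed.

Lemma tr_proj_incidence : BS^T = B1^T - B2^T *m (B2p^T *m B1^T).
Proof.
by rewrite /proj_incidence trmx_mul raddfB /= trmx1 trmx_mul mulmxBl mul1mx mulmxA.
Qed.

Lemma schurmx_proj_incidence_sym : schurmx B1 B2 G = BS *m G *m BS^T.
Proof.
by rewrite schurmx_proj_incidence tr_proj_incidence mulmxBr (mulmxA _ B2^T)
  proj_incidence_orth mul0mx subr0.
Qed.

Lemma proj_incidence_tr_ker (x1 : 'cV_p) :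
  BS^T *m x1 = 0 <-> exists x2, B1^T *m x1 + B2^T *m x2 = 0.
Proof.
rewrite tr_proj_incidence mulmxBl; split=> [ker | [x2 ker]].
  by exists (- (B2p^T *m B1^T *m x1)); rewrite mulmxN mulmxA.
rewrite -mulmxA -(mulmxA B2p^T).
have -> : B1^T *m x1 = - (B2^T *m x2) by apply/eqP; rewrite -addr_eq0 ker.
by rewrite !mulmxN (mulmxA B2p^T) -trmx_mul wpinvmx_rinv trmx1 mul1mx opprK addNr.
Qed.

End SchurComplement.

Theorem proposition1 (R : realFieldType) (n1 n2 m : nat)
  (tl hd : 'I_m -> 'I_(n1 + n2)) (gamma : 'rV[R]_m) :
  (forall k, tl k != hd k) ->
  connected_graph tl hd ->
  (0 < n1)%N -> (0 < n2)%N ->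
  (forall k, 0 < gamma 0 k) ->
  let B : 'M[R]_(n1 + n2, m) := incidence R tl hd in
  let B1 := usubmx B in
  let B2 := dsubmx B in
  let G := diag_mx gamma in
  let LS := B1 *m G *m B1^T - B1 *m G *m B2^T *m invmx (B2 *m G *m B2^T) *m B2 *m G *m B1^T in
  let B2p := G *m B2^T *m invmx (B2 *m G *m B2^T) in
  let BS := B1 *m (1%:M - B2p *m B2) in
  [/\ (forall x : 'cV[R]_n1, BS^T *m x = 0 <-> exists c : R, x = c *: const_mx 1),
      BS *m G *m B2^T = 0,
      LS = BS *m G *m B1^T &
      LS = BS *m G *m BS^T].
Proof.
move=> _ conn n1_gt0 _ gamma_gt0 B B1 B2 G LS B2p BS.
have M_unit : B2 *m G *m B2^T \in unitmx.
  by apply: unitmx_mul_diag_tr => // v; apply: incidence_dsubmx_left_ker.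
split; [move=> x | exact: proj_incidence_orth | exact: schurmx_proj_incidence
       | exact: schurmx_proj_incidence_sym].
rewrite (proj_incidence_tr_ker B1 M_unit); split=> [[x2 ker] | [c ->]].
  pose i0 : 'I_n1 := Ordinal n1_gt0.
  exists (x i0 0); apply/matrixP => i j; rewrite (ord1 j) !mxE mulr1.
  by have := incidence_blocks_ker_const conn ker (lshift n2 i) (lshift n2 i0);
    rewrite !col_mxEu.
exists (c *: const_mx 1); rewrite -!scalemxAr -scalerDr -tr_col_mul_col.
by rewrite col_mx_const vsubmxK incidence_tr_const scaler0.
Qed.
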